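(* Let $\mathfrak{A}[\tau]$ be a semi-associative topological partial *-algebra with multiplication core $\mathfrak{B}$. Then $\mathfrak{A}^+(\mathfrak{B})\subseteq\mathfrak{A}^+_{\rm top}\subseteq\mathfrak{A}^+_{\mathcal{M}}$ for every $\mathcal{M}\subseteq\mathcal{P}_{\mathfrak{B}}(\mathfrak{A})$.
   Context: A partial *-algebra is a complex vector space $\mathfrak{A}$ with conjugate-linear involution and distributive partial multiplication on $\Gamma\subset\mathfrak{A}\times\mathfrak{A}$ with $(x,y)\in\Gamma$ iff $(y^*,x^* )\in\Gamma$, then $(xy)^*=y^*x^*$; $L(y)=\{x:(x,y)\in\Gamma\}$, $R(x)=\{y:(x,y)\in\Gamma\}$; $R\mathfrak{A}$ is the set of universal right multipliers. Semi-associative: $y\in R(x)$ implies $yz\in R(x)$ and $(xy)z=x(yz)$ for all $z\in R\mathfrak{A}$. A topological partial *-algebra: Hausdorff locally convex topology $\tau$ such that each map $y\in R(x)\mapsto xy$ is closed. $\tau^*$ is given by seminorms $\max\{p(x),p(x^* )\}$. A multiplication core is a subspace $\mathfrak{B}\subseteq R\mathfrak{A}$ with: $e\in\mathfrak{B}$ if a unit $e$ exists; $\mathfrak{B}\mathfrak{B}\subseteq\mathfrak{B}$; $\mathfrak{B}$ $\tau^*$-dense; $x\mapsto xb$ $\tau$-continuous for $b\in\mathfrak{B}$; $b^*(xc)=(b^*x)c$. An ips-form with core $\mathfrak{B}$ is a positive sesquilinear form $\varphi$ on $\mathfrak{A}\times\mathfrak{A}$ with $\mathfrak{B}\subset R\mathfrak{A}$,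 $\{x+N_\varphi:x\in\mathfrak{B}\}$ dense in the completion of $\mathfrak{A}/N_\varphi$ ($N_\varphi=\{x:\varphi(x,x)=0\}$), $\varphi(xa,b)=\varphi(a,x^*b)$ ($x\in\mathfrak{A}$, $a,b\in\mathfrak{B}$) and $\varphi(x^*a,yb)=\varphi(a,(xy)b)$ ($x\in L(y)$, $a,b\in\mathfrak{B}$). $\mathcal{P}_{\mathfrak{B}}(\mathfrak{A})$ is the set of ips-forms with core $\mathfrak{B}$ that are $\tau$-continuous ($|\varphi(x,y)|\le p(x)p(y)$ for a continuous seminorm $p$). $\mathfrak{A}^+(\mathfrak{B})$ is the $\tau$-closure of $\{\sum_{k=1}^n x_k^*x_k:x_k\in\mathfrak{B},n\in\mathbb{N}\}$; $\mathfrak{A}^+_{\rm top}$ is the $\tau$-closure of $\{\sum_{k=1}^n x_k^*x_k:x_k\in R\mathfrak{A},n\in\mathbb{N}\}$; for $\mathcal{M}\subseteq\mathcal{P}_{\mathfrak{B}}(\mathfrak{A})$, $\mathfrak{A}^+_{\mathcal{M}}=\{x\in\mathfrak{A}:\varphi(xa,a)\ge0\ \forall\varphi\in\mathcal{M},a\in\mathfrak{B}\}$. *)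

From mathcomp Require Import all_boot all_algebra.
From mathcomp Require Import reals.
From mathcomp.real_closed Require Import complex.
Set Implicit Arguments. Unset Strict Implicit. Unset Printing Implicit Defensive.
Import GRing.Theory Num.Theory.
Local Open Scope ring_scope.
Local Open Scope complex_scope.

Section PartialStarAlgebras.
Variable R : realType.
Local Notation C := R[i].
Variable A : lmodType C.
(* involution, domain Gamma of the partial multiplication, multiplication
   (a total function, only meaningful on Gamma) *)
Variable star : A -> A.
Variable Gam : A -> A -> Prop.
Variable mul : A -> A -> A.

Definition partial_star_algebra : Prop :=
  [/\ (forall x, star (star x) = x) /\
      (forall (a : C) x y, star (a *: x + y) = a^* *: star x + star y),
      (forall x y, Gam x y <-> Gam (star y) (star x)),
      (forall x y1 y2 (a b : C), Gam x y1 -> Gam x y2 ->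
          Gam x (a *: y1 + b *: y2) /\
          mul x (a *: y1 + b *: y2) = a *: mul x y1 + b *: mul x y2),
      (forall x1 x2 y (a b : C), Gam x1 y -> Gam x2 y ->
          Gam (a *: x1 + b *: x2) y /\
          mul (a *: x1 + b *: x2) y = a *: mul x1 y + b *: mul x2 y)
    & (forall x y, Gam x y -> star (mul x y) = mul (star y) (star x))].

Definition Lmul (y : A) : A -> Prop := fun x => Gam x y.
Definition Rmul (x : A) : A -> Prop := fun y => Gam x y.
Definition RA (y : A) : Prop := forall x, Gam x y.

Definition semi_associative : Prop :=
  forall x y z, Rmul x y -> RA z ->
    Rmul x (mul y z) /\ mul (mul x y) z = mul x (mul y z).

Definition seminorm (p : A -> R) : Prop :=
  (forall x y, p (x + y) <= p x + p y) /\
  (forall (a : C) x, (p (a *: x))%:C = `|a| * (p x)%:C).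

(* The locally convex topology tau is given by a family P of seminorms. *)
Definition hausdorff_lc (P : (A -> R) -> Prop) : Prop :=
  (forall p, P p -> seminorm p) /\
  (forall x, (forall p, P p -> p x = 0) -> x = 0).

Definition nbhd (P : (A -> R) -> Prop) (x : A) (U : A -> Prop) : Prop :=
  exists n (ps : 'I_n -> A -> R) (e : R),
    [/\ (forall i, P (ps i)), 0 < e &
        forall y, (forall i, ps i (y - x) < e) -> U y].

Definition tclosure (P : (A -> R) -> Prop) (S : A -> Prop) (x : A) : Prop :=
  forall U, nbhd P x U -> exists y, S y /\ U y.

Definition tcontinuous (P : (A -> R) -> Prop) (f : A -> A) : Prop :=
  forall x V, nbhd P (f x) V -> exists U, nbhd P x U /\ forall y, U y -> V (f y).

Definition cont_seminorm (P : (A -> R) -> Prop) (p : A -> R) : Prop :=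
  seminorm p /\
  forall x (e : R), 0 < e ->
    exists U, nbhd P x U /\ forall y, U y -> `|p y - p x| < e.

Definition tstar (P : (A -> R) -> Prop) : (A -> R) -> Prop :=
  fun q => exists p, P p /\ q = (fun x => Num.max (p x) (p (star x))).

(* the map y \in R(x) |-> xy is closed (its graph is closed in A x A) *)
Definition closed_left_mult (P : (A -> R) -> Prop) : Prop :=
  forall x y z,
    (forall U V, nbhd P y U -> nbhd P z V ->
       exists y', [/\ Rmul x y', U y' & V (mul x y')]) ->
    Rmul x y /\ z = mul x y.

Definition topological_psa (P : (A -> R) -> Prop) : Prop :=
  [/\ partial_star_algebra, hausdorff_lc P & closed_left_mult P].

Definition is_unit (e : A) : Prop :=
  forall x, [/\ Gam e x, Gam x e, mul e x = x & mul x e = x].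

Definition subspace (B : A -> Prop) : Prop :=
  B 0 /\ forall (a : C) x y, B x -> B y -> B (a *: x + y).

Definition multiplication_core (P : (A -> R) -> Prop) (B : A -> Prop) : Prop :=
  [/\ subspace B /\ (forall b, B b -> RA b),
      (forall e, is_unit e -> B e) /\
      (forall b c, B b -> B c -> B (mul b c)),
      (forall x, tclosure (tstar P) B x),
      (forall b, B b -> tcontinuous P (fun x => mul x b)) &
      (forall b c x, B b -> B c ->
          mul (star b) (mul x c) = mul (mul (star b) x) c)].

Definition pos_sesq (phi : A -> A -> C) : Prop :=
  [/\ (forall (a : C) x y z, phi (a *: x + y) z = a * phi x z + phi y z),
      (forall (a : C) x y z, phi x (a *: y + z) = a^* * phi x y + phi x z) &
      (forall x, 0 <= phi x x)].

(* ips-form with core B.  Density of B + N_phi in the completion of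
   A / N_phi is written out: every x is approximated by elements of B in the
   seminorm x |-> phi(x,x)^(1/2). *)
Definition ips_form (B : A -> Prop) (phi : A -> A -> C) : Prop :=
  [/\ pos_sesq phi,
      (forall b, B b -> RA b),
      (forall x (e : R), 0 < e -> exists b, B b /\ phi (x - b) (x - b) < e%:C),
      (forall x a b, B a -> B b -> phi (mul x a) b = phi a (mul (star x) b)) &
      (forall x y a b, Lmul y x -> B a -> B b ->
          phi (mul (star x) a) (mul y b) = phi a (mul (mul x y) b))].

Definition PB (P : (A -> R) -> Prop) (B : A -> Prop) (phi : A -> A -> C) : Prop :=
  ips_form B phi /\
  exists p, cont_seminorm P p /\
    forall x y, `|phi x y| <= (p x * p y)%:C.

Definition sos (S : A -> Prop) (y : A) : Prop :=
  exists s : seq A, (forall x, x \in s -> S x) /\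
    y = \sum_(x <- s) mul (star x) x.

Definition Aplus_core (P : (A -> R) -> Prop) (B : A -> Prop) : A -> Prop :=
  tclosure P (sos B).
Definition Aplus_top (P : (A -> R) -> Prop) : A -> Prop :=
  tclosure P (sos RA).
Definition Aplus_M (B : A -> Prop) (M : (A -> A -> C) -> Prop) (x : A) : Prop :=
  forall phi, M phi -> forall a, B a -> 0 <= phi (mul x a) a.

End PartialStarAlgebras.

(** Positivity in [A^+_top] is inherited from the sums of squares: for
    [phi] in [P_B(A)] and [a] in [B], the ips-form axioms turn
    [phi((z^* z) a, a)] into [phi(z a, z a) >= 0], so [y |-> phi(y a, a)] is
    nonnegative on every [sum z_k^* z_k].  This map is [tau]-continuous
    (right multiplication by [a] is continuous and [phi] is dominated by a
    continuous seminorm), and the nonnegative reals are closed in [C], so the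
    inequality passes to the [tau]-closure.  The first inclusion is monotonicity
    of closures, as [B] consists of universal right multipliers. *)
From mathcomp Require Import all_boot all_order all_algebra.
From mathcomp Require Import reals.
From mathcomp.real_closed Require Import complex.
From mathcomp Require Import lra.
Set Implicit Arguments. Unset Strict Implicit. Unset Printing Implicit Defensive.
Import Order.TTheory GRing.Theory Num.Theory.
Local Open Scope ring_scope.
Local Open Scope complex_scope.

Section ComplexOrder.
Variable R : realType.

Lemma normc_ge_Re (a b : R) : `|a|%:C <= `|a +i* b|.
Proof.
rewrite normc_def lecR -sqrtr_sqr ler_sqrt ?addr_ge0 ?sqr_ge0 //.
by rewrite lerDl sqr_ge0.
Qed.

Lemma normc_ge_Im (a b : R) : `|b|%:C <= `|a +i* b|.
Proof.
rewrite normc_def lecR -sqrtr_sqr ler_sqrt ?addr_ge0 ?sqr_ge0 //.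
by rewrite lerDr sqr_ge0.
Qed.

Lemma complex_ge0_closed (c : R[i]) :
  (forall e : R, 0 < e -> exists2 z : R[i], 0 <= z & `|z - c| < e%:C) ->
  0 <= c.
Proof.
case: c => a b approx; rewrite lecE /=; apply: contraT => not_ge0.
(* No nonnegative real is closer to [a +i* b] than [e]. *)
pose e : R := Num.max `|b| (- a).
have e_gt0 : 0 < e.
  by move: not_ge0; rewrite lt_max normr_gt0 oppr_gt0 negb_and -ltNge.
have [[x y] + dist] := approx e e_gt0; rewrite lecE /= => /andP[/eqP y0 x_ge0].
have {}dist : `|(x - a) +i* (y - b)| < e%:C := dist.
have := le_lt_trans (normc_ge_Re _ _) dist.
have := le_lt_trans (normc_ge_Im _ _) dist.
rewrite !ltcR y0 sub0r normrN !lt_max => /orP[|] ? /orP[|] ?;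
  have := ler_norm (x - a); lra.
Qed.

End ComplexOrder.

Section Seminorms.
Variables (R : realType) (A : lmodType R[i]) (p : A -> R).
Hypothesis p_seminorm : seminorm p.

Lemma seminorm0 : p 0 = 0.
Proof.
by have [_ /(_ 0 0)] := p_seminorm; rewrite scale0r normr0 mul0r => -[].
Qed.

Lemma seminormN x : p (- x) = p x.
Proof.
have [_ /(_ (-1) x)] := p_seminorm.
by rewrite scaleN1r normrN normr1 mul1r => -[].
Qed.

Lemma seminorm_ge0 x : 0 <= p x.
Proof.
have [/(_ x (- x)) + _] := p_seminorm.
by rewrite subrr seminorm0 seminormN; lra.
Qed.

End Seminorms.

Section LocallyConvexTopology.
Variables (R : realType) (A : lmodType R[i]) (P : (A -> R) -> Prop).

Definition continuous_at_C (f : A -> R[i]) (x : A) : Prop :=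
  forall e : R, 0 < e ->
    exists U, nbhd P x U /\ forall y, U y -> `|f y - f x| < e%:C.

Lemma tclosureS (S T : A -> Prop) :
  (forall x, S x -> T x) -> forall x, tclosure P S x -> tclosure P T x.
Proof.
move=> ST x clSx U Ux; have [y [Sy Uy]] := clSx U Ux.
by exists y; split => //; apply: ST.
Qed.

Lemma nbhd_shift (x : A) (U : A -> Prop) :
  nbhd P 0 U -> nbhd P x (fun y => U (y - x)).
Proof.
move=> [n [ps [e [Pps e_gt0 sub_U]]]].
exists n, ps, e; split => // y near_y; apply: sub_U => i.
by rewrite subr0; apply: near_y.
Qed.

Lemma cont_seminorm_nbhd (p : A -> R) (x : A) (d : R) :
  cont_seminorm P p -> 0 < d ->
  exists U, nbhd P x U /\ forall y, U y -> p (y - x) < d.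
Proof.
move=> [p_seminorm p_cont] d_gt0.
have [U [U0 small_U]] := p_cont 0 d d_gt0.
exists (fun y => U (y - x)); split; first exact: nbhd_shift.
move=> y /small_U; rewrite seminorm0 // subr0.
exact: le_lt_trans (ler_norm _).
Qed.

Lemma continuous_at_C_comp (f : A -> R[i]) (g : A -> A) (x : A) :
  tcontinuous P g -> continuous_at_C f (g x) ->
  continuous_at_C (fun y => f (g y)) x.
Proof.
move=> g_cont f_cont e e_gt0; have [V [Vgx small_V]] := f_cont e e_gt0.
have [U [Ux UV]] := g_cont x V Vgx.
by exists U; split => // y /UV /small_V.
Qed.

Lemma tclosure_ge0 (S : A -> Prop) (f : A -> R[i]) (x : A) :
  (forall y, S y -> 0 <= f y) -> continuous_at_C f x ->
  tclosure P S x -> 0 <= f x.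
Proof.
move=> f_ge0 f_cont clSx; apply: complex_ge0_closed => e e_gt0.
have [U [Ux small_U]] := f_cont e e_gt0.
have [y [Sy Uy]] := clSx U Ux.
by exists (f y); [apply: f_ge0 | apply: small_U].
Qed.

Lemma bounded_form_continuous_at (phi : A -> A -> R[i]) (p : A -> R) a x :
  pos_sesq phi -> cont_seminorm P p ->
  (forall y z, `|phi y z| <= (p y * p z)%:C) ->
  continuous_at_C (phi^~ a) x.
Proof.
move=> [phi_linear _ _] p_cont phi_bound e e_gt0.
have p_ge0 := seminorm_ge0 p_cont.1.
pose d := e / (p a + 1).
have d_gt0 : 0 < d by rewrite divr_gt0 // ltr_wpDl.
have [U [Ux small_U]] := cont_seminorm_nbhd x p_cont d_gt0.
exists U; split => // y /small_U p_small.
have phiB : phi y a - phi x a = phi (y - x) a.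
  by rewrite [y - x]addrC -scaleN1r phi_linear mulN1r addrC.
rewrite phiB; apply: le_lt_trans (phi_bound _ _) _; rewrite ltcR.
apply: (@le_lt_trans _ _ (d * p a)); first by rewrite ler_wpM2r // ltW.
rewrite /d mulrAC ltr_pdivrMr ?ltr_wpDl // ltr_pM2l //.
by rewrite ltrDl ltr01.
Qed.

End LocallyConvexTopology.

Section PositiveForms.
Variables (R : realType) (A : lmodType R[i]).
Variables (star : A -> A) (Gam : A -> A -> Prop) (mul : A -> A -> A).
Hypothesis psa : partial_star_algebra star Gam mul.

Lemma mul_suml_RA (a : A) (s : seq A) (F : A -> A) :
  RA Gam a -> mul (\sum_(z <- s) F z) a = \sum_(z <- s) mul (F z) a.
Proof.
have [_ _ _ mul_linear _] := psa => RAa.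
apply: (big_morph (mul^~ a)) => [u v|].
  by have [_] := mul_linear u v a 1 1 (RAa u) (RAa v); rewrite !scale1r.
by have [_] := mul_linear 0 0 a 0 0 (RAa 0) (RAa 0); rewrite !scale0r addr0.
Qed.

Lemma pos_sesq_suml (phi : A -> A -> R[i]) (s : seq A) (F : A -> A) b :
  pos_sesq phi -> phi (\sum_(z <- s) F z) b = \sum_(z <- s) phi (F z) b.
Proof.
move=> [phi_linear _ _]; apply: (big_morph (phi^~ b)) => [u v|].
  by have := phi_linear 1 u v b; rewrite scale1r mul1r.
by have := phi_linear (-1) 0 0 b; rewrite scaleN1r oppr0 addr0 mulN1r addNr.
Qed.

Variable B : A -> Prop.

Lemma ips_form_square_ge0 (phi : A -> A -> R[i]) (z a : A) :
  ips_form star Gam mul B phi -> RA Gam z -> B a ->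
  0 <= phi (mul (mul (star z) z) a) a.
Proof.
have [[starK _] _ _ _ starM] := psa.
move=> [[_ _ phi_ge0] _ _ phi_adj phi_assoc] RAz Ba.
rewrite phi_adj // starM // starK -(phi_assoc (star z)) //.
by rewrite starK phi_ge0.
Qed.

Lemma ips_form_sos_ge0 (phi : A -> A -> R[i]) (y a : A) :
  ips_form star Gam mul B phi -> sos star mul (RA Gam) y -> B a ->
  0 <= phi (mul y a) a.
Proof.
move=> phi_ips [s [sRA ->]] Ba; have [phi_sesq RA_B _ _ _] := phi_ips.
rewrite mul_suml_RA; last exact: RA_B.
rewrite pos_sesq_suml // big_seq; apply: sumr_ge0 => z zs.
exact: ips_form_square_ge0 phi_ips (sRA z zs) Ba.
Qed.

End PositiveForms.

Theorem proposition5p7 (R : realType) (A : lmodType R[i])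
  (star : A -> A) (Gam : A -> A -> Prop) (mul : A -> A -> A)
  (P : (A -> R) -> Prop) (B : A -> Prop)
  (M : (A -> A -> R[i]) -> Prop) :
  topological_psa star Gam mul P ->
  semi_associative Gam mul ->
  multiplication_core star Gam mul P B ->
  (forall phi, M phi -> PB star Gam mul P B phi) ->
  (forall x, Aplus_core star mul P B x -> Aplus_top star Gam mul P x) /\
  (forall x, Aplus_top star Gam mul P x -> Aplus_M mul B M x).
Proof.
move=> [psa _ _] _ [[_ RA_B] _ _ B_cont _] M_PB; split.
  apply: tclosureS => _ [s [sB ->]].
  by exists s; split => // z /sB /RA_B.
move=> x x_top phi /M_PB [phi_ips [p [p_cont phi_bound]]] a Ba.
have [phi_sesq _ _ _ _] := phi_ips.
have sos_ge0 y (y_sos : sos star mul (RA Gam) y) : 0 <= phi (mul y a) a :=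
  ips_form_sos_ge0 psa phi_ips y_sos Ba.
have cont : continuous_at_C P (fun y => phi (mul y a) a) x :=
  continuous_at_C_comp (B_cont a Ba)
    (bounded_form_continuous_at _ _ phi_sesq p_cont phi_bound).
exact: tclosure_ge0 sos_ge0 cont x_top.
Qed.
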